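(* Let $I \subseteq A = \mathbbm{k}[X_1,\dots,X_r]$ be a monomial ideal and let $\mathbf{a} \in \mathbb{N}^r$. Let $p, q \in \mathbb{N}$ with $q \neq 0$. Then $x^{\mathbf{a}} \in I_{p/q}$ if and only if $\nu^*_{\mathbf{a}}(I) \ge \frac{p}{q}$.
   Context: $\mathbbm{k}$ is a field. For an ideal $I$ in a domain $A$ and a positive rational $u = p/q$ ($p,q\in\mathbb{N}$, $q\neq 0$), the $u$-th rational power is $I_u = \{x \in A : x^q \in \overline{I^p}\}$, where $\overline{\,\cdot\,}$ denotes integral closure; this does not depend on the representation of $u$. For a monomial ideal $I$ with minimal monomial generators whose exponent vectors form the columns of the $r\times m$ matrix $M$ (the exponent matrix of $I$), and $\mathbf{a}\in\mathbb{N}^r$, $\nu^*_{\mathbf{a}}(I)$ denotes the optimal value of the linear program: maximize $\mathbf{1}^m\cdot \mathbf{y}$ subject to $M\mathbf{y} \le \mathbf{a}$, $\mathbf{y}\in\mathbb{R}^m_{\ge 0}$ (equivalently, by LP duality, the minimum of $\mathbf{a}\cdot\mathbf{z}$ subject to $M^T\mathbf{z}\ge \mathbf{1}^m$, $\mathbf{z}\in\mathbb{R}^r_{\ge0}$). $x^{\mathbf a}$ denotes the monomial with exponent vector $\mathbf a$. *)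

From mathcomp Require Import all_boot all_algebra.
From mathcomp Require Import mpoly.
From mathcomp Require Import boolp classical_sets reals constructive_ereal ereal.

Set Implicit Arguments.
Unset Strict Implicit.
Unset Printing Implicit Defensive.

Import GRing.Theory Num.Theory.
Local Open Scope ring_scope.

Section IdealDefs.
Variable A : comNzRingType.

Definition ideal_span (S : A -> Prop) : A -> Prop :=
  fun f => exists (n : nat) (c g : 'I_n -> A),
      (forall i, S (g i)) /\ f = \sum_(i < n) c i * g i.

Fixpoint ideal_pow (J : A -> Prop) (n : nat) : A -> Prop :=
  match n with
  | 0 => ideal_span (fun g => g = 1)
  | n'.+1 => ideal_span (fun g => exists u v, J u /\ ideal_pow J n' v /\ g = u * v)
  end.

(* Integral closure of an ideal J: x satisfies an equation
   x^n + c_1 x^(n-1) + ... + c_n = 0 with n >= 1 and c_j in J^j.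
   Here c i stands for c_(i+1). *)
Definition integral_closure (J : A -> Prop) : A -> Prop :=
  fun x => exists (n : nat) (c : 'I_n -> A),
      (0 < n)%N /\ (forall i : 'I_n, ideal_pow J i.+1 (c i)) /\
      x ^+ n + \sum_(i < n) c i * x ^+ (n - i.+1) = 0.

Definition rational_power (I : A -> Prop) (p q : nat) : A -> Prop :=
  fun x => integral_closure (ideal_pow I p) (x ^+ q).

End IdealDefs.

Definition is_min_monomial_gens (k : fieldType) (r : nat)
    (I : {mpoly k[r]} -> Prop) (gens : seq 'X_{1..r}) : Prop :=
  [/\ (forall f, I f <-> ideal_span (fun g => exists2 m, m \in gens & g = 'X_[m]) f),
      uniq gens &
      (forall m1 m2, m1 \in gens -> m2 \in gens -> (m1 <= m2)%MM -> m1 = m2)].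

(* Feasible region of the LP: y >= 0, M y <= a, where column i of M is the
   exponent vector gens_i. *)
Definition lp_feasible (R : realType) (r : nat) (gens : seq 'X_{1..r})
    (a : 'X_{1..r}) (y : 'I_(size gens) -> R) : Prop :=
  (forall i, 0 <= y i) /\
  (forall j : 'I_r,
      \sum_(i < size gens) ((tnth (in_tuple gens) i) j)%:R * y i <= (a j)%:R).

Definition nu_star (R : realType) (r : nat) (gens : seq 'X_{1..r})
    (a : 'X_{1..r}) : \bar R :=
  ereal_sup [set (\sum_(i < size gens) y i)%:E | y in @lp_feasible R r gens a].

(* A monomial x^b lies in I^K iff b dominates a sum of at least K generator
   exponents, i.e. iff the LP defining nu*_b has an integral feasible point of
   value >= K. An integral equation of x^(qa) over I^p has, by comparing
   coefficients of its leading monomial, some coefficient c_n in (I^p)^n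
   containing x^(qan); conversely x^(qaN) in (I^p)^N gives such an equation. So
   x^a lies in I_(p/q) iff, after scaling, the LP for nu*_a has a rational
   feasible point of value >= p/q. That such a point exists as soon as
   nu*_a >= p/q over the reals follows from Fourier-Motzkin elimination: the set
   of values attained by feasible points is cut out by rational linear
   inequalities in one variable, hence is closed and contains the rational
   p/q over R only if it does over Q. *)

From mathcomp Require Import all_boot all_order all_algebra.
From mathcomp Require Import mpoly.
From mathcomp Require Import boolp classical_sets reals constructive_ereal ereal.
From mathcomp Require Import ring lra.
Set Implicit Arguments.
Unset Strict Implicit.
Unset Printing Implicit Defensive.

Import Order.TTheory GRing.Theory Num.Theory.
Local Open Scope ring_scope.

Section IdealSpan.
Variable A : comNzRingType.

Lemma ideal_span_mul (S : A -> Prop) c g : S g -> ideal_span S (c * g).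
Proof.
by move=> Sg; exists 1%N, (fun _ => c), (fun _ => g); rewrite big_ord1.
Qed.

Lemma ideal_span0 (S : A -> Prop) : ideal_span S 0.
Proof. by exists 0%N, (fun _ => 0), (fun _ => 0); split=> [[]|]; rewrite ?big_ord0. Qed.

Lemma ideal_spanN (S : A -> Prop) f : ideal_span S f -> ideal_span S (- f).
Proof.
case=> n [c [g [Sg ->]]]; exists n, (fun i => - c i), g; split=> //.
by rewrite -sumrN; apply: eq_bigr => i _; rewrite mulNr.
Qed.

Lemma ideal_pow0 (J : A -> Prop) n : ideal_pow J n 0.
Proof. by case: n => [|n]; apply: ideal_span0. Qed.

Lemma ideal_powN (J : A -> Prop) n f : ideal_pow J n f -> ideal_pow J n (- f).
Proof. by case: n => [|n]; apply: ideal_spanN. Qed.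

End IdealSpan.

Lemma exists_le_sum_eq m (z : 'I_m -> nat) K : (K <= \sum_i z i)%N ->
  exists z' : 'I_m -> nat, (forall i, z' i <= z i)%N /\ (\sum_i z' i = K)%N.
Proof.
elim: K => [|K IH] leKz; first by exists (fun _ => 0%N); rewrite big1.
have [z' [le_z'z sum_z']] := IH (ltnW leKz).
have [i0 lt_i0] : exists i0, (z' i0 < z i0)%N.
  apply/existsP; apply: contraTT leKz => /existsPn le_zz'.
  by rewrite -leqNgt -sum_z'; apply: leq_sum => i _; rewrite leqNgt le_zz'.
exists (fun i => if i == i0 then (z' i).+1 else z' i); split.
  by move=> i; case: eqP => [->|]; rewrite ?le_z'z.
rewrite (bigD1 i0) //= eqxx -sum_z' (bigD1 i0 (P := xpredT)) //= addSn.
by congr (_.+1 + _); apply: eq_bigr => i /negPf ->.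
Qed.

Lemma mulmnA n (b : 'X_{1..n}) x y : ((b *+ x) *+ y = b *+ (x * y))%MM.
Proof. by apply/mnmP => j; rewrite !mulmnE mulnA. Qed.

Section MonomialIdeal.
Variables (k : fieldType) (r : nat) (gens : seq 'X_{1..r}).
Local Notation m := (size gens).
Local Notation g i := (tnth (in_tuple gens) i).
Local Notation P := {mpoly k[r]}.

Definition int_packing (K : nat) (b : 'X_{1..r}) :=
  exists z : 'I_m -> nat,
    (K <= \sum_i z i)%N /\ forall j, (\sum_i z i * g i j <= b j)%N.

Lemma int_packing0 b : int_packing 0 b.
Proof. by exists (fun _ => 0%N); split=> // j; rewrite big1. Qed.

Lemma int_packing_addl K b b' : int_packing K b -> int_packing K (b' + b)%MM.
Proof.
case=> z [leKz le_zb]; exists z; split=> // j.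
by rewrite mnmDE (leq_trans (le_zb j)) ?leq_addl.
Qed.

Lemma int_packingD K1 K2 b1 b2 :
  int_packing K1 b1 -> int_packing K2 b2 -> int_packing (K1 + K2) (b1 + b2)%MM.
Proof.
case=> z1 [leKz1 le_zb1] [z2 [leKz2 le_zb2]].
exists (fun i => z1 i + z2 i)%N; split; first by rewrite big_split leq_add.
move=> j; rewrite mnmDE (eq_bigr (fun i => z1 i * g i j + z2 i * g i j)%N).
  by rewrite big_split leq_add.
by move=> i _; rewrite mulnDl.
Qed.

Lemma msupp_ideal_span (S : P -> Prop) (Q : 'X_{1..r} -> Prop) :
  (forall b b', Q b -> Q (b' + b)%MM) ->
  (forall f, S f -> forall b, b \in msupp f -> Q b) ->
  forall f, ideal_span S f -> forall b, b \in msupp f -> Q b.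
Proof.
move=> Qup QS f [n [c [h [Sh ->]]]] b /msupp_sum_le /flatten_mapP [i _].
move=> /msuppM_le /allpairsP [[b1 b2] /= [_ hb2 ->]].
exact/Qup/(QS _ (Sh i)).
Qed.

Lemma msupp_ideal_pow (J : P -> Prop) K :
  (forall f, J f -> forall b, b \in msupp f -> int_packing K b) ->
  forall n f, ideal_pow J n f -> forall b, b \in msupp f -> int_packing (K * n) b.
Proof.
move=> JK; elim=> [|n IH] f /=.
  by move=> _ b _; rewrite muln0; apply: int_packing0.
apply: msupp_ideal_span; first exact: int_packing_addl.
move=> _ [u [v [Ju [Jv ->]]]] b /msuppM_le /allpairsP [[b1 b2] /= [h1 h2 ->]].
by rewrite mulnS; apply: int_packingD; [apply: JK Ju _ _ | apply: IH Jv _ _].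
Qed.

Lemma ideal_pow_X (J : P -> Prop) K :
  (forall b, int_packing K b -> J 'X_[b]) ->
  forall N b, int_packing (K * N) b -> ideal_pow J N 'X_[b].
Proof.
move=> JK; elim=> [|N IH] b /=.
  by move=> _; rewrite -['X_[b]]mulr1; apply: ideal_span_mul.
case=> z [leKz le_zb].
have [z' [le_z'z sum_z']] :=
  exists_le_sum_eq (leq_trans (leq_pmulr K (ltn0Sn N)) leKz).
pose z2 i := (z i - z' i)%N.
have ez i : z i = (z' i + z2 i)%N by rewrite subnKC.
pose c := [multinom (\sum_i z' i * g i j)%N | j < r].
have le_cb : (c <= b)%MM.
  apply/mnm_lepP => j; rewrite mnmE (leq_trans _ (le_zb j)) //.
  by apply: leq_sum => i _; rewrite leq_mul2r le_z'z orbT.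
rewrite -(submK le_cb) mpolyXD -[_ * _]mul1r; apply: ideal_span_mul.
exists 'X_[c], 'X_[b - c]; split; last split; last by rewrite mulrC.
  by apply: JK; exists z'; split=> [|j]; rewrite ?sum_z' ?mnmE.
apply: IH; exists z2; split.
  move: leKz; rewrite (eq_bigr _ (fun i _ => ez i)) big_split /= sum_z'.
  by rewrite mulnS leq_add2l.
move=> j; have := le_zb j; rewrite mnmBE mnmE.
rewrite (eq_bigr (fun i => z' i * g i j + z2 i * g i j)%N) => [|i _]; last first.
  by rewrite ez mulnDl.
by rewrite big_split /= => le_sum; rewrite leq_subRL // (leq_trans _ le_sum) ?leq_addr.
Qed.

Variable I : P -> Prop.
Hypothesis I_gens : forall f,
  I f <-> ideal_span (fun g => exists2 m, m \in gens & g = 'X_[m]) f.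

Lemma msupp_mono_ideal f : I f -> forall b, b \in msupp f -> int_packing 1 b.
Proof.
move=> /I_gens; apply: msupp_ideal_span; first exact: int_packing_addl.
move=> _ [mm mem_mm ->] b; rewrite msuppX mem_seq1 => /eqP ->.
have lt_mm : (index mm gens < m)%N by rewrite index_mem.
pose i0 := Ordinal lt_mm.
exists (fun i => (i == i0 : nat)); split; first by rewrite (bigD1 i0) //= eqxx.
move=> j; rewrite (bigD1 i0) //= eqxx mul1n big1 ?addn0.
  by rewrite (tnth_nth mm) /= nth_index.
by move=> i /negPf ->.
Qed.

Lemma mono_ideal_X b : int_packing 1 b -> I 'X_[b].
Proof.
case=> z [lt0z le_zb].
have [i0 lt_i0] : exists i0, (0 < z i0)%N.
  apply/existsP; apply: contraTT lt0z => /existsPn z0.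
  by rewrite -leqNgt leqn0 sum_nat_eq0; apply/forallP => i; rewrite -leqn0 leqNgt z0.
have le_gb : (g i0 <= b)%MM.
  apply/mnm_lepP => j; apply: leq_trans (le_zb j).
  by rewrite (bigD1 i0) //= (leq_trans _ (leq_addr _ _)) // leq_pmull.
apply/I_gens; rewrite -(submK le_gb) mpolyXD; apply: ideal_span_mul.
by exists (g i0); rewrite ?mem_tnth.
Qed.

Lemma ideal_pow_pow_X p N b :
  int_packing (p * N) b -> ideal_pow (ideal_pow I p) N 'X_[b].
Proof.
apply: ideal_pow_X => {N}b pack_b.
by apply: (ideal_pow_X mono_ideal_X); rewrite mul1n.
Qed.

Lemma msupp_ideal_pow_pow p N f : ideal_pow (ideal_pow I p) N f ->
  forall b, b \in msupp f -> int_packing (p * N) b.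
Proof.
apply: msupp_ideal_pow => {}f If b fb.
by rewrite -[p in int_packing p]mul1n; apply: (msupp_ideal_pow msupp_mono_ideal If).
Qed.

Lemma rational_power_X_packing p q a : rational_power I p q 'X_[a] ->
  exists2 N, (0 < N)%N & int_packing (p * N) (a *+ (q * N))%MM.
Proof.
rewrite /rational_power mpolyXn; set w := (a *+ q)%MM.
case=> n [c [n_gt0 [Ic eq0]]].
have wnE i : (i < n)%N -> (w *+ n = w *+ (n - i.+1) + w *+ i.+1)%MM.
  by move=> lt_in; apply/mnmP => j; rewrite mnmDE !mulmnE -mulnDr subnK.
have : (('X_[w] ^+ n + \sum_(i < n) c i * 'X_[w] ^+ (n - i.+1)) @_ (w *+ n)%MM = 0 :> k).
  by rewrite eq0 mcoeff0.
(* The leading term contributes 1 to the coefficient of x^(wn), so some c_i must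
   contain the monomial x^(w(i+1)). *)
rewrite mcoeffD mpolyXn mcoeffX eqxx raddf_sum /=.
rewrite (eq_bigr (fun i : 'I_n => (c i)@_(w *+ i.+1)%MM)); last first.
  by move=> i _; rewrite mpolyXn (wnE i (ltn_ord i)) mcoeffMX.
have [/existsP [i ci_neq0] _ | /existsPn c0] :=
  boolP [exists i : 'I_n, (c i)@_(w *+ i.+1)%MM != 0].
  exists i.+1 => //; rewrite -mulmnA.
  by apply: msupp_ideal_pow_pow (Ic i) _ _; rewrite mcoeff_msupp.
rewrite big1 ?addr0 => [/eqP|i _]; first by rewrite oner_eq0.
by apply/eqP; move: (c0 i); rewrite negbK.
Qed.

Lemma packing_rational_power_X p q a N : (0 < N)%N ->
  int_packing (p * N) (a *+ (q * N))%MM -> rational_power I p q 'X_[a].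
Proof.
rewrite /rational_power mpolyXn; set w := (a *+ q)%MM.
case: N => // N _ hpack.
exists N.+1, (fun i : 'I_N.+1 => if i == ord_max then - 'X_[w] ^+ N.+1 else 0).
split=> //; split.
  move=> i; case: eqP => [->|_]; last exact: ideal_pow0.
  by apply: ideal_powN; rewrite mpolyXn mulmnA; apply: ideal_pow_pow_X hpack.
rewrite big_ord_recr /= eqxx subnn expr0 mulr1 big1 ?add0r ?subrr //.
by move=> i _; rewrite ifF ?mul0r // -val_eqE /= ltn_eqF.
Qed.

End MonomialIdeal.

(* The rational linear constraint [c . v <= d], encoded as the pair (c, d). *)
Definition lcon n := ({ffun 'I_n -> rat} * rat)%type.

Definition ctail n (c : {ffun 'I_n.+1 -> rat}) : {ffun 'I_n -> rat} :=
  [ffun i => c (lift ord0 i)].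

Definition fm_comb n (P N : lcon n.+1) : lcon n :=
  ([ffun i => - N.1 ord0 * P.1 (lift ord0 i) + P.1 ord0 * N.1 (lift ord0 i)],
   - N.1 ord0 * P.2 + P.1 ord0 * N.2).

Definition fm_elim n (S : seq (lcon n.+1)) : seq (lcon n) :=
  [seq (ctail cd.1, cd.2) | cd : lcon n.+1 <- S & cd.1 ord0 == 0] ++
  [seq fm_comb P N | P : lcon n.+1 <- [seq cd <- S | 0 < (cd : lcon n.+1).1 ord0],
                     N : lcon n.+1 <- [seq cd <- S | (cd : lcon n.+1).1 ord0 < 0]].

Fixpoint fm_project k : seq (lcon k.+1) -> seq (lcon 1) :=
  if k is k'.+1 then fun S => fm_project (fm_elim S) else id.

Section FourierMotzkin.
Variable F : realFieldType.

Definition dot n (c : {ffun 'I_n -> rat}) (v : 'I_n -> F) :=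
  \sum_i ratr (c i) * v i.
Definition satc n (cd : lcon n) v := dot cd.1 v <= ratr cd.2.
Definition sat n (S : seq (lcon n)) v := all (fun cd => satc cd v) S.

Definition vcons n (x : F) (v : 'I_n -> F) : 'I_n.+1 -> F :=
  fun i => if unlift ord0 i is Some j then v j else x.

Definition fm_bound n (cd : lcon n.+1) (v : 'I_n -> F) :=
  (ratr cd.2 - dot (ctail cd.1) v) / ratr (cd.1 ord0).

Lemma dot_vcons n c x (v : 'I_n -> F) :
  dot c (vcons x v) = ratr (c ord0) * x + dot (ctail c) v.
Proof.
rewrite /dot big_ord_recl /vcons unlift_none; congr (_ + _).
by apply: eq_bigr => i _; rewrite liftK ffunE.
Qed.

Lemma eq_sat n S (v1 v2 : 'I_n -> F) : v1 =1 v2 -> sat S v1 = sat S v2.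
Proof.
move=> eq_v; apply: eq_all => cd; rewrite /satc /dot.
by under eq_bigr do rewrite eq_v.
Qed.

Lemma satc_vcons0 n (cd : lcon n.+1) x v :
  cd.1 ord0 = 0 -> satc cd (vcons x v) = satc (ctail cd.1, cd.2) v.
Proof. by move=> c0; rewrite /satc dot_vcons c0 rmorph0 mul0r add0r. Qed.

Lemma satc_vcons_gt0 n (cd : lcon n.+1) x v :
  0 < cd.1 ord0 -> satc cd (vcons x v) = (x <= fm_bound cd v).
Proof.
rewrite -(ltr0q F) => c0.
by rewrite /satc /fm_bound dot_vcons [RHS]ler_pdivlMr // lerBrDr mulrC.
Qed.

Lemma satc_vcons_lt0 n (cd : lcon n.+1) x v :
  cd.1 ord0 < 0 -> satc cd (vcons x v) = (fm_bound cd v <= x).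
Proof.
rewrite -(ltrq0 F) => c0.
by rewrite /satc /fm_bound dot_vcons [RHS]ler_ndivrMr // lerBrDr mulrC.
Qed.

Lemma satc_fm_comb n (P N : lcon n.+1) v : 0 < P.1 ord0 -> N.1 ord0 < 0 ->
  satc (fm_comb P N) v = (fm_bound N v <= fm_bound P v).
Proof.
rewrite -(ltr0q F) -(ltrq0 F) /fm_bound => P0 N0.
rewrite ler_pdivlMr // mulrAC ler_ndivrMr // /satc /dot.
rewrite (eq_bigr (fun i => ratr (- N.1 ord0) * (ratr (ctail P.1 i) * v i) +
                           ratr (P.1 ord0) * (ratr (ctail N.1 i) * v i))); last first.
  by move=> i _; rewrite !ffunE rmorphD !rmorphM /= mulrDl !mulrA.
rewrite big_split /= -!mulr_sumr -/(dot _ v) -/(dot _ v) /= rmorphD !rmorphM rmorphN /=.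
set dP := dot _ v; set dN := dot _ v; nra.
Qed.

Lemma exists_between (Ls Us : seq F) :
  (forall l u, l \in Ls -> u \in Us -> l <= u) ->
  exists x, (forall l, l \in Ls -> l <= x) /\ (forall u, u \in Us -> x <= u).
Proof.
elim: Ls => [|l0 Ls IH] le_LU.
  exists (\big[Num.min/0]_(u <- Us) u); split=> // u.
  elim: Us {le_LU} => // u0 Us IHU; rewrite inE big_cons.
  by case/orP => [/eqP->|/IHU le]; rewrite ge_min ?lexx // le orbT.
case: IH => [l u hl hu|x [le_Lx le_xU]]; first by apply: le_LU; rewrite ?inE ?hl ?orbT.
exists (Num.max l0 x); split.
  by move=> l; rewrite inE le_max => /orP [/eqP->|/le_Lx->]; rewrite ?lexx ?orbT.
by move=> u Uu; rewrite ge_max le_xU // andbT le_LU ?mem_head.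
Qed.

Lemma sat_fm_elim n (S : seq (lcon n.+1)) x v :
  sat S (vcons x v) -> sat (fm_elim S) v.
Proof.
move=> /allP satS; apply/allP => cd; rewrite mem_cat => /orP [].
  case/mapP => cd0; rewrite mem_filter => /andP [/eqP c0 /satS] + ->.
  by rewrite satc_vcons0.
case/allpairsP => -[P N] /= []; rewrite !mem_filter.
case/andP => P0 /satS + /andP [N0 /satS] + ->.
rewrite satc_vcons_gt0 // satc_vcons_lt0 // satc_fm_comb // => xP Nx.
exact: le_trans Nx xP.
Qed.

Lemma fm_elim_sat n (S : seq (lcon n.+1)) v :
  sat (fm_elim S) v -> exists x, sat S (vcons x v).
Proof.
move=> /allP satFS.
have [|x [le_Nx le_xP]] := exists_between
  (Ls := [seq fm_bound cd v | cd : lcon n.+1 <- S & cd.1 ord0 < 0])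
  (Us := [seq fm_bound cd v | cd : lcon n.+1 <- S & 0 < cd.1 ord0]).
  move=> _ _ /mapP [N SN ->] /mapP [P SP ->].
  move: SN SP; rewrite !mem_filter => /andP [N0 SN] /andP [P0 SP].
  rewrite -satc_fm_comb //; apply: satFS; rewrite mem_cat; apply/orP; right.
  by apply: allpairs_f; rewrite mem_filter ?P0 ?N0.
exists x; apply/allP => cd Scd; case: (ltgtP (cd.1 ord0) 0) => c0.
- by rewrite satc_vcons_lt0 //; apply/le_Nx/map_f; rewrite mem_filter c0.
- by rewrite satc_vcons_gt0 //; apply/le_xP/map_f; rewrite mem_filter c0.
- rewrite satc_vcons0 //; apply: satFS.
  by rewrite mem_cat map_f // mem_filter c0 eqxx.
Qed.

Lemma fm_elimP n (S : seq (lcon n.+1)) v :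
  sat (fm_elim S) v <-> exists x, sat S (vcons x v).
Proof. by split=> [|[x]]; [apply: fm_elim_sat | apply: sat_fm_elim]. Qed.

Lemma fm_projectP k (S : seq (lcon k.+1)) (t : F) :
  sat (fm_project S) (fun _ => t) <->
  exists v : 'I_k.+1 -> F, v ord_max = t /\ sat S v.
Proof.
have lift_max j : lift ord0 (ord_max : 'I_j.+1) = ord_max by apply: val_inj.
elim: k S => [|k IH] S /=.
  split=> [satS|[v [vt satS]]]; first by exists (fun _ => t).
  by rewrite (eq_sat _ (v2 := v)) // => i; rewrite (ord1 i) -vt; congr v; apply: val_inj.
rewrite IH; split=> [[v [vt /fm_elimP [x satS]]]|[v [vt satS]]].
  by exists (vcons x v); rewrite /vcons -lift_max liftK.
exists (fun i => v (lift ord0 i)); split; first by rewrite lift_max.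
apply/fm_elimP; exists (v ord0); rewrite (eq_sat _ (v2 := v)) // => i.
by rewrite /vcons; case: unliftP => [j ->|->].
Qed.

Lemma sat1_closed (S : seq (lcon 1)) (t : F) :
  (forall e, 0 < e -> sat S (fun _ => t - e)) -> sat S (fun _ => t).
Proof.
move=> satS; apply/allP => cd Scd; rewrite /satc /dot big_ord1.
apply/ler_addgt0Pr => e e0; set c := ratr (cd.1 ord0).
have [c_le0|c_gt0] := lerP c 0.
  have := allP (satS 1 ltr01) cd Scd; rewrite /satc /dot big_ord1 -/c; nra.
have := allP (satS (e / c) (divr_gt0 e0 c_gt0)) cd Scd.
rewrite /satc /dot big_ord1 -/c mulrBr mulrCA divff ?mulr1 ?gt_eqF //; lra.
Qed.

End FourierMotzkin.

Lemma sat_ratr (F : realFieldType) n (S : seq (lcon n)) (v : 'I_n -> rat) :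
  sat S (fun i => ratr (v i) : F) = sat S v.
Proof.
have ratr_id (x : rat) : ratr x = x by rewrite /ratr divq_num_den.
apply: eq_all => cd; rewrite /satc /dot -(ler_rat F) rmorph_sum /= ratr_id.
by congr (_ <= _); apply: eq_bigr => i _; rewrite rmorphM /= ratr_id.
Qed.

Lemma scale_rat_nat n (y : 'I_n -> rat) : (forall i, 0 <= y i) ->
  exists2 D, (0 < D)%N & exists z : 'I_n -> nat, forall i, (z i)%:R = y i * D%:R.
Proof.
move=> y_ge0; pose d i := `|denq (y i)|%N.
have d_gt0 i : (0 < d i)%N by rewrite absz_gt0 denq_neq0.
have dE i : (d i)%:R = (denq (y i))%:~R :> rat.
  by rewrite natr_absz gtr0_norm // denq_gt0.
exists (\prod_i d i)%N; first by rewrite prodn_gt0.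
exists (fun i => `|numq (y i)| * \prod_(j | j != i) d j)%N => i.
rewrite [in RHS](bigD1 i) //= !natrM dE mulrA -numqE natr_absz ger0_norm //.
by rewrite numq_ge0.
Qed.

Section LPSystem.
Variables (r : nat) (gens : seq 'X_{1..r}) (a : 'X_{1..r}).
Local Notation m := (size gens).
Local Notation g i := (tnth (in_tuple gens) i).
Local Notation yv i := (lift ord_max i : 'I_m.+1).

(* The variables y_i come first; the last one, ord_max, stands for the value 1.y. *)
Definition lp_coef (cy : 'I_m -> rat) (ct : rat) : {ffun 'I_m.+1 -> rat} :=
  [ffun k => if unlift ord_max k is Some i then cy i else ct].

Definition lp_system : seq (lcon m.+1) :=
  [seq (lp_coef (fun i' => - (i' == i)%:R) 0, 0) | i <- enum 'I_m] ++
  [seq (lp_coef (fun i => (g i j)%:R) 0, (a j)%:R) | j <- enum 'I_r] ++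
  [:: (lp_coef (fun _ => -1) 1, 0)].

Lemma dot_lp_coef (F : realFieldType) cy ct (v : 'I_m.+1 -> F) :
  dot (lp_coef cy ct) v = \sum_i ratr (cy i) * v (yv i) + ratr ct * v ord_max.
Proof.
rewrite /dot big_ord_recr /= ffunE unlift_none; congr (_ + _).
apply: eq_bigr => i _; have -> : widen_ord (leqnSn m) i = yv i.
  by apply: val_inj; rewrite /= /bump leqNgt ltn_ord.
by rewrite ffunE liftK.
Qed.

Lemma sat_lp_system (F : realFieldType) (v : 'I_m.+1 -> F) :
  sat lp_system v <-> [/\ forall i, 0 <= v (yv i),
     forall j, \sum_i (g i j)%:R * v (yv i) <= (a j)%:R &
     v ord_max <= \sum_i v (yv i)].
Proof.
have nonnegE i : satc (lp_coef (fun i' => - (i' == i)%:R) 0, 0) v = (0 <= v (yv i)).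
  rewrite /satc dot_lp_coef /= (bigD1 i) //= big1 => [|i' /negPf ->]; last first.
    by rewrite rmorph0 mul0r.
  by rewrite eqxx !rmorph0 rmorphN rmorph1 !mul0r !addr0 mulN1r oppr_le0.
have rowE j : satc (lp_coef (fun i => (g i j)%:R) 0, (a j)%:R) v =
              (\sum_i (g i j)%:R * v (yv i) <= (a j)%:R).
  rewrite /satc dot_lp_coef /= rmorph0 mul0r addr0 ratr_nat.
  by under eq_bigr do rewrite ratr_nat.
have valueE : satc (lp_coef (fun _ => -1) 1, 0) v = (v ord_max <= \sum_i v (yv i)).
  rewrite /satc dot_lp_coef /= rmorph1 rmorph0 mul1r.
  under eq_bigr do rewrite rmorphN rmorph1 mulN1r.
  by rewrite sumrN addrC subr_le0.
rewrite /sat !all_cat !all_map /= andbT valueE; split.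
  case/and3P => /allP nonneg /allP row value; split=> [i|j|//].
    by rewrite -nonnegE; exact: nonneg (mem_index_enum i).
  by rewrite -rowE; exact: row (mem_index_enum j).
by case=> nonneg row value; apply/and3P; split=> //; apply/allP => x _ /=;
  rewrite ?nonnegE ?rowE.
Qed.

Lemma packing_le_nu_star (R : realType) p q N : (0 < N)%N -> (q != 0)%N ->
  int_packing gens (p * N) (a *+ (q * N))%MM ->
  ((p%:R / q%:R : R)%:E <= nu_star R gens a)%E.
Proof.
move=> N_gt0 q_neq0 [z [le_pz le_za]].
have qN_gt0 : 0 < (q * N)%:R :> R by rewrite ltr0n muln_gt0 lt0n q_neq0.
pose y i := (z i)%:R / (q * N)%:R : R.
apply: (@le_trans _ _ (\sum_i y i)%:E); last first.
  apply: ereal_sup_ubound; exists y => //; split=> [i|j].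
    by rewrite divr_ge0 ?ler0n.
  rewrite (eq_bigr (fun i => (z i * g i j)%:R / (q * N)%:R)); last first.
    by move=> i _; rewrite /y mulrA (mulrC (g i j)%:R) -natrM.
  by rewrite -mulr_suml -natr_sum ler_pdivrMr // -natrM ler_nat -mulmnE.
have -> : p%:R / q%:R = (p * N)%:R / (q * N)%:R :> R.
  by rewrite !natrM; field; rewrite !pnatr_eq0 -!lt0n N_gt0 lt0n q_neq0.
by rewrite lee_fin -mulr_suml -natr_sum ler_wpM2r ?invr_ge0 ?ler0n ?ler_nat.
Qed.

Lemma nu_star_rational_feasible (R : realType) (t : rat) :
  ((ratr t : R)%:E <= nu_star R gens a)%E ->
  exists y : 'I_m -> rat, [/\ forall i, 0 <= y i,
    forall j, \sum_i (g i j)%:R * y i <= (a j)%:R & t <= \sum_i y i].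
Proof.
move=> le_t_nu.
have sat_t : sat (fm_project lp_system) (fun _ => ratr t : R).
  apply: sat1_closed => e e_gt0; apply/fm_projectP.
  have /ereal_sup_gt[_ [y [y_ge0 le_ya] <-]] : ((ratr t - e)%:E < nu_star R gens a)%E.
    by apply: lt_le_trans le_t_nu; rewrite lte_fin ltrBlDr ltrDl.
  rewrite lte_fin => lt_ty.
  exists (fun k => if unlift ord_max k is Some i then y i else ratr t - e).
  rewrite unlift_none; split=> //; apply/sat_lp_system; rewrite unlift_none.
  split=> [i|j|]; first by rewrite liftK.
    by under eq_bigr do rewrite liftK.
  by under eq_bigr do rewrite liftK; apply: ltW.
move: sat_t; rewrite (@sat_ratr R _ _ (fun _ => t)).
move=> /fm_projectP[v [<- /sat_lp_system]].
by case=> v_ge0 le_va le_v; exists (fun i => v (yv i)).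
Qed.

Lemma rational_feasible_packing p q (y : 'I_m -> rat) : (q != 0)%N ->
  (forall i, 0 <= y i) -> (forall j, \sum_i (g i j)%:R * y i <= (a j)%:R) ->
  p%:R / q%:R <= \sum_i y i ->
  exists2 N, (0 < N)%N & int_packing gens (p * N) (a *+ (q * N))%MM.
Proof.
move=> q_neq0 y_ge0 le_ya le_py.
have [D D_gt0 [z zE]] := scale_rat_nat y_ge0.
have q_gt0 : 0 < q%:R :> rat by rewrite ltr0n lt0n.
exists D => //; exists (fun i => q * z i)%N; split=> [|j].
  rewrite -big_distrr /= -(ler_nat rat) !natrM natr_sum.
  under eq_bigr do rewrite zE.
  by rewrite -mulr_suml mulrA ler_wpM2r ?ler0n // mulrC -ler_pdivrMr.
rewrite mulmnE -(ler_nat rat) natr_sum !natrM.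
rewrite (eq_bigr (fun i => q%:R * D%:R * ((g i j)%:R * y i))) => [|i _]; last first.
  by rewrite !natrM zE; ring.
by rewrite -mulr_sumr mulrC ler_wpM2r ?mulr_ge0 ?ler0n.
Qed.

End LPSystem.

Theorem lemma2p1 (k : fieldType) (r : nat) (R : realType)
    (I : {mpoly k[r]} -> Prop) (gens : seq 'X_{1..r})
    (a : 'X_{1..r}) (p q : nat) :
  is_min_monomial_gens I gens -> (q != 0)%N ->
  (rational_power I p q 'X_[a] <->
   ((p%:R / q%:R : R)%:E <= nu_star R gens a)%E).
Proof.
case=> I_gens _ _ q_neq0; split.
  case/(rational_power_X_packing I_gens) => N N_gt0.
  exact: packing_le_nu_star N_gt0 q_neq0.
have ratr_pq : ratr (p%:R / q%:R) = p%:R / q%:R :> R by rewrite fmorph_div /= !ratr_nat.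
rewrite -ratr_pq => /nu_star_rational_feasible[y [y_ge0 le_ya le_py]].
have [N N_gt0] := rational_feasible_packing q_neq0 y_ge0 le_ya le_py.
by move/(packing_rational_power_X I_gens N_gt0).
Qed.
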